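(* For every $a\in k\setminus\{0,1\}$ one has $\partial(\langle a\rangle)=2\,\epsilon(a)$ in $k\otimes_{\mathbb Z}k^\times$, where $\epsilon(a):=a\otimes a+(1-a)\otimes(1-a)$.
   Context: Let $k$ be an algebraically closed field of characteristic $\neq 2$, $R$ the local ring of ${\mathbb A}^1_k=\mathrm{Spec}\,k[t]$ at $t=0$, $\mathfrak m=tR$. For $(a,b)\in (R\times\mathfrak m^2)\cup(\mathfrak m^2\times R)$, $\langle a,b\rangle\in K_2(R,\mathfrak m^2)$ is the Dennis–Stein (pointy bracket) symbol, corresponding to the Milnor symbol $\{1-ab,b\}$ when $b\neq0$. $\mathcal C$ is the subgroup generated by the $\langle a,b\rangle$ with $a\in\mathfrak m^2$, $b\in k$, and $TB_2(k):=K_2(R,\mathfrak m^2)/\mathcal C$. For $v\in k^\times$, $\mathrm{tame}_v:K_2(R,\mathfrak m^2)\to k^\times$ is the tame symbol at $t=v$, and $\partial:TB_2(k)\to k\otimes_{\mathbb Z}k^\times$ is induced by $x\mapsto\sum_{v\in k^\times}v^{-1}\otimes\mathrm{tame}_v(x)$. For $a\in k\setminus\{0,1\}$, $\langle a\rangle:=\big\langle t^2,\tfrac{a(1-a)}{t-1}\big\rangle\in TB_2(k)$. *)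

From HB Require Import structures.
From mathcomp Require Import all_boot all_order all_algebra.
Set Implicit Arguments. Unset Strict Implicit. Unset Printing Implicit Defensive.
Import Order.TTheory GRing.Theory Num.Theory.
Local Open Scope ring_scope.

(* k(t) is modelled as {fraction {poly k}}; t = 'X. *)

Section TB2.
Variable k : fieldType.

Definition ratfun := {fraction {poly k}}.

Definition tvar : ratfun := FracField.tofrac ('X : {poly k}).
Definition cst (c : k) : ratfun := FracField.tofrac (c%:P).

Definition rnum (f : ratfun) : {poly k} := \n_(repr f).
Definition rden (f : ratfun) : {poly k} := \d_(repr f).

Definition ordv (v : k) (f : ratfun) : int :=
  (mup v (rnum f))%:Z - (mup v (rden f))%:Z.

Definition unitval (v : k) (f : ratfun) : k :=
  (rnum f %/ ('X - v%:P) ^+ mup v (rnum f)).[v] /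
  (rden f %/ ('X - v%:P) ^+ mup v (rden f)).[v].

Definition tame (v : k) (f g : ratfun) : k :=
  (-1) ^ (ordv v f * ordv v g) *
  (unitval v g ^ (ordv v f) / unitval v f ^ (ordv v g)).

(* Dennis--Stein symbol <A, B> = Milnor symbol {1 - A B, B} *)
Definition DS (A B : ratfun) : ratfun * ratfun := (1 - A * B, B).

Definition bracket_a (a : k) : ratfun * ratfun :=
  DS (tvar ^+ 2) (cst (a * (1 - a)) / (tvar - 1)).

(* Bilinear maps k x k^x -> G (additive in the first variable,
   multiplicative-to-additive in the second): these are exactly the group
   homomorphisms out of k (x)_Z k^x. *)
Definition bilin (G : zmodType) (phi : k -> k -> G) : Prop :=
  (forall x y u, u != 0 -> phi (x + y) u = phi x u + phi y u) /\
  (forall x u w, u != 0 -> w != 0 -> phi x (u * w) = phi x u + phi x w).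

(* Equality in k (x)_Z k^x of two formal sums  sum x_i (x) u_i  (u_i <> 0),
   tested against every homomorphism out of the tensor product. *)
Definition tensor_eq (s1 s2 : seq (k * k)) : Prop :=
  forall (G : zmodType) (phi : k -> k -> G), bilin phi ->
    \sum_(p <- s1) phi p.1 p.2 = \sum_(p <- s2) phi p.1 p.2.

Definition epsilon (a : k) : seq (k * k) := [:: (a, a); (1 - a, 1 - a)].

(* boundary:  d(x) = sum_{v in k^x} v^{-1} (x) tame_v(x)  equals target;
   the sum is finitely supported: S is a finite set of nonzero points outside
   of which tame_v(x) = 1 (so the term v^{-1} (x) 1 vanishes). *)
Definition boundary_eq (x : ratfun * ratfun) (target : seq (k * k)) : Prop :=
  exists S : seq k,
    [/\ uniq S, (forall v, v \in S -> v != 0),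
        (forall v, v != 0 -> v \notin S -> tame v x.1 x.2 = 1) &
        tensor_eq [seq (v^-1, tame v x.1 x.2) | v <- S] target].

End TB2.

From HB Require Import structures.
From mathcomp Require Import all_boot all_order all_algebra.
From mathcomp Require Import zify ring.
Import Order.TTheory GRing.Theory Num.Theory.
Local Open Scope ring_scope.
Local Open Scope quotient_scope.

(* With c = a(1-a), <a> is the Milnor symbol {f, g} with g = c/(t-1) and
   f = 1 - t^2 g = -c (t - 1/a)(t - 1/(1-a)) / (t - 1), since 1/a and 1/(1-a)
   both sum and multiply to 1/c.  Away from t = 1 the function g is a unit, so
   tame_v{f, g} = g(v)^(ord_v f): this is a^2 at v = 1/a, (1-a)^2 at
   v = 1/(1-a), and 1 elsewhere.  At t = 1 both f and g have a simple pole and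
   the tame symbol is (1 - 1/a)(1 - 1/(1-a)) = 1.  Hence the boundary is
   a (x) a^2 + (1-a) (x) (1-a)^2 = 2 epsilon(a). *)

Section PolyUnitPart.
Context {k : fieldType}.
Variable v : k.

(* [unitval v f] unfolds to [punitval v (rnum f) / punitval v (rden f)]. *)
Definition punitval (p : {poly k}) : k := (p %/ ('X - v%:P) ^+ mup v p).[v].

Lemma punitval_factor (q : {poly k}) (m : nat) :
  ~~ root q v -> punitval (q * ('X - v%:P) ^+ m) = q.[v].
Proof.
move=> qNv; rewrite /punitval mupMr // mup_XsubCX eqxx.
by rewrite mulpK // expf_neq0 // polyXsubC_eq0.
Qed.

Lemma punitval_neq0 (p : {poly k}) : p != 0 -> punitval p != 0.
Proof.
move=> p0; have [m /sig2_eqW [q qNv Dp]] := multiplicity_XsubC p v.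
by rewrite p0 /= in qNv; rewrite Dp punitval_factor.
Qed.

Lemma punitvalM (p q : {poly k}) :
  p != 0 -> q != 0 -> punitval (p * q) = punitval p * punitval q.
Proof.
move=> p0 q0.
have [m /sig2_eqW [p1 p1Nv Dp]] := multiplicity_XsubC p v.
have [n /sig2_eqW [q1 q1Nv Dq]] := multiplicity_XsubC q v.
rewrite p0 /= in p1Nv; rewrite q0 /= in q1Nv.
rewrite Dp Dq mulrACA -exprD !punitval_factor ?hornerM // rootM.
by rewrite negb_or p1Nv q1Nv.
Qed.

Lemma punitvalC (c : k) : punitval c%:P = c.
Proof.
have [->|c0] := eqVneq c 0; first by rewrite /punitval div0p horner0.
by rewrite /punitval mupNroot ?rootC // expr0 divp1 hornerC.
Qed.

Lemma punitval_XsubC (w : k) :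
  punitval ('X - w%:P) = if w == v then 1 else v - w.
Proof.
have [->|wv] := eqVneq w v.
  have -> : 'X - v%:P = 1 * ('X - v%:P) ^+ 1 by rewrite mul1r expr1.
  by rewrite punitval_factor ?root1 ?hornerC.
by rewrite /punitval mupNroot ?expr0 ?divp1 ?rootE !hornerE // subr_eq0 eq_sym.
Qed.

End PolyUnitPart.

Lemma mup_XsubC (k : fieldType) (v w : k) : mup v ('X - w%:P) = (w == v).
Proof. by have := @mup_XsubCX k 1 v w; rewrite expr1 => ->; case: eqP. Qed.

Lemma mup_polyC (k : fieldType) (v c : k) : c != 0 -> mup v c%:P = 0%N.
Proof. by move=> c0; rewrite mupNroot // rootC. Qed.

Lemma tofrac_repr (R : idomainType) (f : {fraction R}) :
  FracField.tofrac (\n_(repr f)) = f * FracField.tofrac (\d_(repr f)).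
Proof.
set x := repr f; have -> : f = \pi_(FracField.type R) x by rewrite /x reprK.
unlock FracField.tofrac.
rewrite -[_ * _]FracField.pi_mul; apply/eqmodP.
rewrite /= FracField.equivfE /FracField.mulf /=.
rewrite !numden_Ratio ?mulf_neq0 ?oner_neq0 ?denom_ratioP //.
by rewrite mulr1 mul1r mulrC.
Qed.

Section FractionRepresentative.
Context {k : fieldType} {n d : {poly k}} {f : ratfun k}.
Hypotheses (n0 : n != 0) (d0 : d != 0).
Hypothesis Ef : FracField.tofrac n = f * FracField.tofrac d.

Lemma rnum_cross : rnum f * d = n * rden f.
Proof.
apply/eqP; rewrite -tofrac_eq !tofracM /rnum /rden tofrac_repr Ef.
by apply/eqP; ring.
Qed.

Let rden0 : rden f != 0. Proof. exact: denom_ratioP. Qed.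

Let rnum0 : rnum f != 0.
Proof.
apply: contraTneq (mulf_neq0 n0 rden0) => f0.
by rewrite -rnum_cross f0 mul0r eqxx.
Qed.

Lemma ordv_frac (v : k) : ordv v f = (mup v n)%:Z - (mup v d)%:Z.
Proof.
have : (mup v (rnum f) + mup v d = mup v n + mup v (rden f))%N.
  by rewrite -!mupM // rnum_cross.
rewrite /ordv; lia.
Qed.

Lemma unitval_frac (v : k) : unitval v f = punitval v n / punitval v d.
Proof.
apply/eqP; rewrite /unitval -!/(punitval v _) eqr_div ?punitval_neq0 //.
by rewrite -!punitvalM // rnum_cross.
Qed.

End FractionRepresentative.

Lemma tame_ordv0 (k : fieldType) (v : k) (f g : ratfun k) :
  ordv v g = 0 -> tame v f g = unitval v g ^ ordv v f.
Proof. by move=> g0; rewrite /tame g0 mulr0 !expr0z mul1r divr1. Qed.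

Lemma sumr_seq_pred1 (G : nmodType) (I : eqType) (r : seq I) (x : I)
    (F : I -> G) :
  uniq r -> x \in r -> \sum_(v <- r) F v *+ (x == v) = F x.
Proof.
move=> r_uniq r_x; rewrite (bigD1_seq x) //= eqxx big1 ?addr0 // => v.
by rewrite eq_sym => /negbTE ->.
Qed.

Lemma bilin_exp (k : fieldType) (G : zmodType) (phi : k -> k -> G)
    (x u : k) (n : nat) :
  bilin phi -> u != 0 -> phi x (u ^+ n) = phi x u *+ n.
Proof.
move=> [_ phiM] u0; elim: n => [|n IHn].
  by apply/(addrI (phi x 1)); rewrite -phiM ?oner_neq0 // mulr1 addr0.
by rewrite exprS phiM ?expf_neq0 // IHn mulrS.
Qed.

Section BracketA.
Context {k : fieldType} {a : k} (a0 : a != 0) (a1 : a != 1).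

Local Notation c := (a * (1 - a)).
Local Notation alpha := a^-1.
Local Notation beta := (1 - a)^-1.
Local Notation num := ((- c)%:P * (('X - alpha%:P) * ('X - beta%:P))).
Local Notation den := ('X - 1%:P : {poly k}).

Let a1' : 1 - a != 0. Proof. by rewrite subr_eq0 eq_sym. Qed.
Let c0 : c != 0. Proof. exact: mulf_neq0. Qed.

Let alpha_neq1 : (alpha == 1) = false.
Proof. by rewrite invr_eq1 (negbTE a1). Qed.

Let beta_neq1 : (beta == 1) = false.
Proof.
by rewrite invr_eq1 -subr_eq0 addrAC subrr sub0r oppr_eq0 (negbTE a0).
Qed.

Let tofrac_den : FracField.tofrac den = tvar k - 1.
Proof. by rewrite rmorphB /= rmorph1. Qed.

Let tvar_sub1_neq0 : tvar k - 1 != 0.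
Proof. by rewrite -tofrac_den tofrac_eq0 polyXsubC_eq0. Qed.

Lemma bracket_numE : num = 'X - 1 - c%:P * 'X^2.
Proof.
have sum_roots : c * (alpha + beta) = 1 by field; rewrite a0 a1'.
have prod_roots : c * (alpha * beta) = 1 by field; rewrite a0 a1'.
transitivity
  (- c%:P * 'X^2 + (c * (alpha + beta))%:P * 'X - (c * (alpha * beta))%:P).
  by rewrite polyCN !polyCM polyCD; ring.
by rewrite sum_roots prod_roots polyC1; ring.
Qed.

Lemma bracket_a1_frac :
  FracField.tofrac num = (bracket_a a).1 * FracField.tofrac den.
Proof.
rewrite /= bracket_numE tofrac_den mulrBl mul1r -mulrA divfK //.
by rewrite !rmorphB rmorphM rmorphXn /= rmorph1 mulrC.
Qed.

Lemma bracket_a2_frac :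
  FracField.tofrac c%:P = (bracket_a a).2 * FracField.tofrac den.
Proof. by rewrite /= tofrac_den divfK. Qed.

Let num0 : num != 0.
Proof. by rewrite !mulf_neq0 ?polyXsubC_eq0 // polyC_eq0 oppr_eq0. Qed.

Let den0 : den != 0. Proof. by rewrite polyXsubC_eq0. Qed.

Let cP0 : c%:P != 0. Proof. by rewrite polyC_eq0. Qed.

Lemma mup_bracket_num (v : k) : mup v num = ((alpha == v) + (beta == v))%N.
Proof.
rewrite !mupM ?mulf_neq0 ?polyXsubC_eq0 ?polyC_eq0 ?oppr_eq0 //.
by rewrite mup_polyC ?oppr_eq0 // !mup_XsubC.
Qed.

Lemma punitval_bracket_num (v : k) :
  punitval v num = - c * punitval v ('X - alpha%:P) * punitval v ('X - beta%:P).
Proof.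
rewrite !punitvalM ?mulf_neq0 ?polyXsubC_eq0 ?polyC_eq0 ?oppr_eq0 //.
by rewrite punitvalC mulrA.
Qed.

Lemma tame_bracket_a_at1 : tame 1 (bracket_a a).1 (bracket_a a).2 = 1.
Proof.
have ordv_f := ordv_frac num0 den0 bracket_a1_frac.
have ordv_g := ordv_frac cP0 den0 bracket_a2_frac.
have unitval_f := unitval_frac num0 den0 bracket_a1_frac.
have unitval_g := unitval_frac cP0 den0 bracket_a2_frac.
rewrite /tame ordv_f ordv_g unitval_f unitval_g.
rewrite mup_bracket_num punitval_bracket_num mup_polyC // !mup_XsubC.
rewrite !punitval_XsubC punitvalC alpha_neq1 beta_neq1 eqxx /= !divr1.
rewrite add0n !sub0r mulrNN mulr1 expr1z !exprN1 invrK.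
by field; rewrite a1' a0.
Qed.

Lemma tame_bracket_a_neq1 (v : k) : v != 1 ->
  tame v (bracket_a a).1 (bracket_a a).2
  = (c / (v - 1)) ^+ ((alpha == v) + (beta == v)).
Proof.
move=> v1; have one_v : (1 == v) = false by rewrite eq_sym (negbTE v1).
rewrite tame_ordv0; last first.
  by rewrite (ordv_frac cP0 den0 bracket_a2_frac) mup_polyC // mup_XsubC one_v.
rewrite (ordv_frac num0 den0 bracket_a1_frac).
rewrite (unitval_frac cP0 den0 bracket_a2_frac).
rewrite mup_bracket_num mup_XsubC one_v punitvalC punitval_XsubC one_v.
by rewrite subr0.
Qed.

Lemma tame_bracket_a (v : k) :
  tame v (bracket_a a).1 (bracket_a a).2
  = (a ^+ 2) ^+ (alpha == v) * ((1 - a) ^+ 2) ^+ (beta == v).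
Proof.
have [->|v1] := eqVneq v 1.
  by rewrite alpha_neq1 beta_neq1 mulr1 tame_bracket_a_at1.
rewrite tame_bracket_a_neq1 // exprD.
congr (_ * _); case: eqP => [<-|_] //; rewrite !expr1; field.
  by rewrite a0 mulN1r a1'.
by rewrite a1' mulN1r opprB addrC subrK a0.
Qed.

End BracketA.

Theorem lemma3p1 (k : closedFieldType) (hchar : (2%:R : k) != 0)
  (a : k) (ha0 : a != 0) (ha1 : a != 1) :
  boundary_eq (bracket_a a) (epsilon a ++ epsilon a).
Proof.
have ha1' : 1 - a != 0 by rewrite subr_eq0 eq_sym.
set S := undup [:: a^-1; (1 - a)^-1].
have S_uniq : uniq S := undup_uniq _.
have S_alpha : a^-1 \in S by rewrite mem_undup mem_head.
have S_beta : (1 - a)^-1 \in S by rewrite mem_undup !inE eqxx orbT.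
exists S; split => //.
- by move=> v; rewrite mem_undup !inE => /orP [] /eqP ->; rewrite invr_eq0.
- move=> v _; rewrite mem_undup !inE negb_or !(eq_sym v).
  case/andP => /negbTE alpha_v /negbTE beta_v.
  by rewrite tame_bracket_a // alpha_v beta_v mulr1.
- move=> G phi phi_bilin; have [_ phiM] := phi_bilin.
  rewrite big_map.
  under eq_bigr => v _ do
    rewrite /= tame_bracket_a // phiM ?expf_neq0 // !bilin_exp ?expf_neq0 //.
  rewrite big_split !sumr_seq_pred1 // !invrK big_cat !big_cons !big_nil /=.
  by rewrite !mulr2n !addr0 addrACA.
Qed.
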